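(* Let $m,n$ be positive integers and $x\ge 2$ real. Define $\alpha_j\ge0$ ($1\le j\le n$) and $\beta_k\ge0$ ($1\le k\le m$) by $$\cosh\frac{\alpha_j}{2}=\frac{x}{\cos\frac{\pi(2j-1)}{4n}}-\cos\frac{\pi(2j-1)}{4n},\qquad \cosh\frac{\beta_k}{2}=\frac{x}{\cos\frac{\pi(2k-1)}{4m}}-\cos\frac{\pi(2k-1)}{4m}.$$ Then $$\prod_{j=1}^n\left(\cosh(m\alpha_j)+\cos\frac{m\pi(2j-1)}{2n}\right)=\prod_{k=1}^m\left(\cosh(n\beta_k)+\cos\frac{n\pi(2k-1)}{2m}\right).$$ *)

From Stdlib Require Import Reals.
Open Scope R_scope.

Fixpoint prod1 (n : nat) (f : nat -> R) : R :=
  match n with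
  | O => 1
  | S k => prod1 k f * f (S k)
  end.

Definition theta (n j : nat) : R := PI * (2 * INR j - 1) / (4 * INR n).

From Stdlib Require Import Reals Lra Lia.
From mathcomp Require all_boot all_algebra complex Rstruct ring.
Open Scope R_scope.

(** Write [c_j = cos (theta n j)], [e_k = cos (theta m k)] and [T_m] for the
    Chebyshev polynomial, whose roots are the [2 e_k^2 - 1] and whose leading
    coefficient is [2^(m-1)].  Since [T_m (cos (B - i A)) = cos (m (B - i A))],
    taking squared moduli gives
    [cosh (2 m A) + cos (2 m B) = 2 4^(m-1) prod_k |cos (B - i A) - (2 e_k^2 - 1)|^2].
    For [A = alpha_j / 2], [B = theta n j], the defining relation of [alpha_j]
    turns [c_j^2] times the [k]-th factor into
    [G(c_j^2, e_k^2) = x^2 - 4 c_j^2 e_k^2 (x - c_j^2 - e_k^2 + 1)],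
    which is symmetric in its two arguments.  The powers of [c_j] are absorbed by
    [prod_j c_j^2 = 2^(1-2n)] (the case [A = 0], [B = pi]), so both sides equal
    [2^((2n-1) m + (2m-1) n) prod_j prod_k G(c_j^2, e_k^2)]. *)

Lemma cosh_add a b : cosh (a + b) = cosh a * cosh b + sinh a * sinh b.
Proof. unfold cosh, sinh. rewrite Ropp_plus_distr, !exp_plus. field. Qed.

Lemma sinh_add a b : sinh (a + b) = sinh a * cosh b + cosh a * sinh b.
Proof. unfold cosh, sinh. rewrite Ropp_plus_distr, !exp_plus. field. Qed.

Lemma cosh_opp a : cosh (- a) = cosh a.
Proof. unfold cosh. rewrite Ropp_involutive. lra. Qed.

Lemma sinh_opp a : sinh (- a) = - sinh a.
Proof. unfold sinh. rewrite Ropp_involutive. lra. Qed.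

Lemma cosh_sq_sub_sinh_sq a : cosh a ^ 2 - sinh a ^ 2 = 1.
Proof.
  transitivity (cosh (a + - a)).
  - rewrite cosh_add, cosh_opp, sinh_opp. ring.
  - rewrite Rplus_opp_r. apply cosh_0.
Qed.

Lemma sqr_cosh_cos_add_sqr_sinh_sin x y :
  (cosh x * cos y) ^ 2 + (sinh x * sin y) ^ 2 = (cosh (2 * x) + cos (2 * y)) / 2.
Proof.
  replace (2 * x) with (x + x) by ring. rewrite cosh_add, cos_2a_cos.
  pose proof (cosh_sq_sub_sinh_sq x). pose proof (sin2_cos2 y). unfold Rsqr in *.
  field_simplify. nra.
Qed.

(* The real and imaginary parts of [cos (k (B - i A))]. *)
Definition cosh_cos (A B : R) (k : nat) : R := cosh (INR k * A) * cos (INR k * B).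
Definition sinh_sin (A B : R) (k : nat) : R := sinh (INR k * A) * sin (INR k * B).

(* [cos ((k+2) z) = 2 cos z cos ((k+1) z) - cos (k z)] for [z = B - i A]. *)
Lemma cosh_cos_sinh_sin_rec A B k :
  cosh_cos A B (S (S k)) = 2 * (cosh_cos A B (S k) * cosh_cos A B 1
                                 - sinh_sin A B (S k) * sinh_sin A B 1) - cosh_cos A B k
  /\ sinh_sin A B (S (S k)) = 2 * (cosh_cos A B (S k) * sinh_sin A B 1
                                 + sinh_sin A B (S k) * cosh_cos A B 1) - sinh_sin A B k.
Proof.
  unfold cosh_cos, sinh_sin.
  set (X := INR (S k) * A). set (Y := INR (S k) * B).
  replace (INR (S (S k)) * A) with (X + A) by (unfold X; rewrite (S_INR (S k)); ring).
  replace (INR (S (S k)) * B) with (Y + B) by (unfold Y; rewrite (S_INR (S k)); ring).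
  replace (INR k * A) with (X + - A) by (unfold X; rewrite S_INR; ring).
  replace (INR k * B) with (Y + - B) by (unfold Y; rewrite S_INR; ring).
  rewrite !Rmult_1_l, !cosh_add, !sinh_add, !cos_plus, !sin_plus,
    cosh_opp, sinh_opp, cos_neg, sin_neg.
  split; ring.
Qed.

Lemma cosh_cos_0 B k : cosh_cos 0 B k = cos (INR k * B).
Proof. unfold cosh_cos. rewrite Rmult_0_r, cosh_0. ring. Qed.

Lemma sinh_sin_0 B k : sinh_sin 0 B k = 0.
Proof. unfold sinh_sin. rewrite Rmult_0_r, sinh_0. ring. Qed.

Lemma theta_bounds n j : (1 <= j <= n)%nat -> 0 < theta n j < PI / 2.
Proof.
  intros [h1 h2]. apply le_INR in h1, h2. simpl in h1.
  pose proof PI_RGT_0.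
  assert (E : theta n j * (4 * INR n) = PI * (2 * INR j - 1)) by (unfold theta; field; lra).
  split; nra.
Qed.

Lemma cos_theta_gt0 n j : (1 <= j <= n)%nat -> 0 < cos (theta n j).
Proof. intros H. destruct (theta_bounds n j H). apply cos_gt_0; lra. Qed.

Lemma sin_INR_PI k : sin (INR k * PI) = 0.
Proof.
  induction k as [|k IH].
  - rewrite Rmult_0_l. apply sin_0.
  - rewrite S_INR, Rmult_plus_distr_r, Rmult_1_l, sin_plus, IH, sin_PI. ring.
Qed.

Lemma cos_mul_double_theta m k : (1 <= k <= m)%nat -> cos (INR m * (2 * theta m k)) = 0.
Proof.
  intros hk. assert (0 < INR m) by (apply lt_0_INR; lia).
  replace (INR m * (2 * theta m k)) with (- (PI / 2 - INR k * PI)) by (unfold theta; field; lra).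
  rewrite cos_neg, cos_shift. apply sin_INR_PI.
Qed.

Lemma cos_double_theta_inj m i j : (1 <= i <= m)%nat -> (1 <= j <= m)%nat ->
  cos (2 * theta m i) = cos (2 * theta m j) -> i = j.
Proof.
  intros hi hj H.
  pose proof (theta_bounds m i hi). pose proof (theta_bounds m j hj).
  apply cos_inj in H; [| lra | lra].
  assert (0 < INR m) by (apply lt_0_INR; lia).
  apply INR_eq. unfold theta in H. pose proof PI_RGT_0.
  apply (Rmult_eq_compat_r (2 * INR m / PI)) in H.
  field_simplify in H; lra.
Qed.

Module Chebyshev.
Import all_boot all_algebra complex Rstruct ring.
Import GRing.Theory Num.Theory.
Local Open Scope ring_scope.
Local Open Scope complex_scope.

Section ChebyshevRing.
Variable R : nzRingType.

Fixpoint cheb (k : nat) : {poly R} :=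
  if k is k1.+1 then (if k1 is k0.+1 then cheb k1 * 'X *+ 2 - cheb k0 else 'X) else 1.

Lemma horner_cheb (z : R) (u : nat -> R) :
  u 0%N = 1 -> u 1%N = z -> (forall k, u k.+2 = u k.+1 * z *+ 2 - u k) ->
  forall k, (cheb k).[z] = u k.
Proof.
move=> u0 u1 uS k; suff : (cheb k).[z] = u k /\ (cheb k.+1).[z] = u k.+1 by case.
elim: k => [|k [IHk IHk1]]; first by rewrite /= hornerC hornerX u0 u1.
split=> //; rewrite uS -IHk -IHk1.
by rewrite [cheb _]/= hornerD hornerN hornerMn hornerMX.
Qed.

End ChebyshevRing.

Section ChebyshevIdomain.
Variable R : idomainType.
Hypothesis two_neq0 : 2%:R != 0 :> R.

Lemma size_lead_coef_cheb k :
  size (cheb R k) = k.+1 /\ lead_coef (cheb R k) = 2%:R ^+ k.-1.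
Proof.
suff : [/\ size (cheb R k) = k.+1, lead_coef (cheb R k) = 2%:R ^+ k.-1,
  size (cheb R k.+1) = k.+2 & lead_coef (cheb R k.+1) = 2%:R ^+ k] by case.
elim: k => [|k [IHs0 _ IHs IHl]].
  by rewrite /= size_poly1 lead_coef1 size_polyX lead_coefX.
have size2X : size (cheb R k.+1 * 'X *+ 2) = k.+3.
  by rewrite -scaler_nat size_scale // size_mulX -?size_poly_eq0 IHs.
have size_lt : (size (- cheb R k) < size (cheb R k.+1 * 'X *+ 2))%N.
  by rewrite size_polyN size2X IHs0.
rewrite [cheb R k.+2]/= size_polyDl // lead_coefDl //.
by rewrite size2X -scaler_nat lead_coefZ lead_coefMX IHl exprS.
Qed.

Lemma cheb_prod_XsubC (rs : seq R) :
  all (root (cheb R (size rs))) rs -> uniq_roots rs ->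
  cheb R (size rs) = 2%:R ^+ (size rs).-1 *: \prod_(z <- rs) ('X - z%:P).
Proof.
have [size_cheb lead_cheb] := size_lead_coef_cheb (size rs).
by move=> roots uniq; rewrite {1}(all_roots_prod_XsubC size_cheb roots uniq) lead_cheb.
Qed.
End ChebyshevIdomain.

Lemma horner_cheb_cosh_cos A B k :
  (cheb R[i] k).[cosh_cos A B 1 +i* sinh_sin A B 1] = cosh_cos A B k +i* sinh_sin A B k.
Proof.
apply: (@horner_cheb _ _ (fun k => cosh_cos A B k +i* sinh_sin A B k)) => //.
  by rewrite /cosh_cos /sinh_sin !Rmult_0_l cosh_0 cos_0 sinh_0 sin_0 !RealsE mulr1 mulr0.
move=> {}k; have [-> ->] := cosh_cos_sinh_sin_rec A B k.
simpc; rewrite !RealsE /=; congr (_ +i* _); ring.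
Qed.

Lemma prod1E m (f : nat -> R) : prod1 m f = \prod_(1 <= k < m.+1) f k.
Proof. by elim: m => [|m IHm]; [rewrite big_geq | rewrite big_nat_recr //= IHm]. Qed.

Lemma sqr_norm_complex (a b : R) : `|a +i* b| ^+ 2 = (a ^+ 2 + b ^+ 2)%:C.
Proof. by rewrite -add_Re2_Im2. Qed.

Lemma sqr_norm_complex_subr (a b c : R) :
  `|a +i* b - c%:C| ^+ 2 = ((a - c) ^+ 2 + b ^+ 2)%:C.
Proof. by rewrite -sqr_norm_complex; simpc. Qed.

Local Close Scope ring_scope.

Lemma sqr_cosh_cos_prod m A B :
  cosh_cos A B m ^ 2 + sinh_sin A B m ^ 2 =
  4 ^ Nat.pred m * prod1 m (fun k => (cosh_cos A B 1 - cos (2 * theta m k)) ^ 2 + sinh_sin A B 1 ^ 2).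
Proof.
Local Open Scope ring_scope.
set d := fun k => cos (2 * theta m k).
set rs := [seq (d k)%:C | k <- iota 1 m].
have size_rs : size rs = m by rewrite size_map size_iota.
have roots : all (root (cheb R[i] (size rs))) rs.
  apply/allP => z /mapP [k]; rewrite mem_iota add1n ltnS size_rs => /andP [k_ge1 k_le] ->.
  have -> : (d k)%:C = cosh_cos 0 (2 * theta m k) 1 +i* sinh_sin 0 (2 * theta m k) 1.
    by rewrite cosh_cos_0 sinh_sin_0 /= Rmult_1_l.
  rewrite /root horner_cheb_cosh_cos cosh_cos_0 sinh_sin_0 cos_mul_double_theta //.
  by split; apply/leP.
have uniq_rs : uniq_roots rs.
  rewrite uniq_rootsE map_inj_in_uniq ?iota_uniq // => i j.
  rewrite !mem_iota !add1n !ltnS => /andP [? ?] /andP [? ?] [].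
  by move/cos_double_theta_inj; apply; split; apply/leP.
have two_neq0 : 2%:R != 0 :> R[i] by rewrite pnatr_eq0.
move: (@cheb_prod_XsubC _ two_neq0 _ roots uniq_rs); rewrite size_rs.
move=> /(congr1 (fun p => `|p.[cosh_cos A B 1 +i* sinh_sin A B 1]| ^+ 2)).
rewrite horner_cheb_cosh_cos hornerZ horner_prod normrM normr_prod exprMn -prodrXl big_map.
rewrite !sqr_norm_complex normrX normr_nat -exprM mulnC exprM -natrX.
under eq_bigr => k _ do rewrite hornerXsubC sqr_norm_complex_subr.
rewrite -(rmorph_nat (real_complex R)) -rmorphXn -rmorph_prod -rmorphM => -[eq].
rewrite !RealsE eq prod1E /index_iota subSS subn0; congr (_ * _).
by apply: eq_bigr => k _; rewrite !RealsE.
Qed.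

End Chebyshev.

Import Chebyshev.

Lemma prod1_ext n f g : (forall j, (1 <= j <= n)%nat -> f j = g j) -> prod1 n f = prod1 n g.
Proof.
  induction n as [|n IH]; intros H; simpl; auto.
  rewrite IH by (intros; apply H; lia). rewrite H by lia. reflexivity.
Qed.

Lemma prod1_mul n f g : prod1 n (fun j => f j * g j) = prod1 n f * prod1 n g.
Proof. induction n as [|n IH]; simpl; [ring | rewrite IH; ring]. Qed.

Lemma prod1_const n c : prod1 n (fun _ => c) = c ^ n.
Proof. induction n as [|n IH]; simpl; [ring | rewrite IH; ring]. Qed.

Lemma prod1_pow n f m : prod1 n (fun j => f j ^ m) = prod1 n f ^ m.
Proof.
  induction n as [|n IH]; simpl; [rewrite pow1; ring | rewrite IH, Rpow_mult_distr; ring].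
Qed.

Lemma prod1_swap n m F :
  prod1 n (fun j => prod1 m (fun k => F j k)) = prod1 m (fun k => prod1 n (fun j => F j k)).
Proof.
  induction n as [|n IH]; simpl.
  - rewrite prod1_const, pow1. reflexivity.
  - rewrite IH, <- prod1_mul. reflexivity.
Qed.

Lemma prod1_gt0 n f : (forall j, (1 <= j <= n)%nat -> 0 < f j) -> 0 < prod1 n f.
Proof.
  induction n as [|n IH]; intros H; simpl; [lra|].
  apply Rmult_lt_0_compat; [apply IH; intros; apply H; lia | apply H; lia].
Qed.

Lemma prod_cos_theta_sq n : (0 < n)%nat ->
  prod1 n (fun j => cos (theta n j) ^ 2) * (2 * 4 ^ Nat.pred n) = 1.
Proof.
  intros hn.
  pose proof (sqr_cosh_cos_prod n 0 PI) as H.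
  rewrite !cosh_cos_0, !sinh_sin_0, Rmult_1_l, cos_PI in H.
  replace (cos (INR n * PI) ^ 2) with 1 in H
    by (pose proof (sin2_cos2 (INR n * PI)); rewrite sin_INR_PI in *; unfold Rsqr in *; lra).
  set (P := prod1 n (fun j => cos (theta n j) ^ 2)) in *.
  assert (HP : prod1 n (fun k => (-1 - cos (2 * theta n k)) ^ 2 + 0 ^ 2) = 4 ^ n * P ^ 2).
  { unfold P. rewrite <- prod1_pow, <- (prod1_const n 4), <- prod1_mul.
    apply prod1_ext. intros k _. rewrite cos_2a_cos. ring. }
  assert (H4 : 4 ^ n = 4 * 4 ^ Nat.pred n) by (destruct n; [lia | reflexivity]).
  assert (HPpos : 0 < P) by (apply prod1_gt0; intros j hj; pose proof (cos_theta_gt0 n j hj); nra).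
  pose proof (pow_lt 4 (Nat.pred n)).
  rewrite HP, H4 in H.
  assert (Hsq : (P * (2 * 4 ^ Nat.pred n)) ^ 2 = 1) by nra.
  assert (0 < P * (2 * 4 ^ Nat.pred n)) by (apply Rmult_lt_0_compat; lra).
  nra.
Qed.

Definition cross_factor (x p q : R) : R := x ^ 2 - 4 * p * q * (x - p - q + 1).

Lemma cross_factor_sym x p q : cross_factor x p q = cross_factor x q p.
Proof. unfold cross_factor. ring. Qed.

Lemma cross_factor_eq x ch sh c s q : c <> 0 -> ch = x / c - c ->
  sh ^ 2 = ch ^ 2 - 1 -> s ^ 2 = 1 - c ^ 2 ->
  c ^ 2 * ((ch * c - (2 * q - 1)) ^ 2 + (sh * s) ^ 2) = cross_factor x (c ^ 2) q.
Proof.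
  intros hc hch hsh hs.
  assert (hchc : ch * c = x - c ^ 2) by (rewrite hch; field; exact hc).
  replace (c ^ 2 * ((ch * c - (2 * q - 1)) ^ 2 + (sh * s) ^ 2))
    with (c ^ 2 * (ch * c - (2 * q - 1)) ^ 2 + ((ch * c) ^ 2 - c ^ 2) * s ^ 2)
    by (rewrite !Rpow_mult_distr, hsh; ring).
  rewrite hchc, hs. unfold cross_factor. ring.
Qed.

Lemma cosh_add_cos_mul_cos_pow m n x a j : (0 < n)%nat -> (1 <= j <= n)%nat ->
  cosh (a / 2) = x / cos (theta n j) - cos (theta n j) ->
  (cosh (INR m * a) + cos (INR m * PI * (2 * INR j - 1) / (2 * INR n)))
    * prod1 m (fun _ => cos (theta n j) ^ 2)
  = 2 * 4 ^ Nat.pred m * prod1 m (fun k => cross_factor x (cos (theta n j) ^ 2) (cos (theta m k) ^ 2)).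
Proof.
  intros hn hj ha.
  assert (0 < INR n) by (apply lt_0_INR; lia).
  pose proof (cos_theta_gt0 n j hj) as hc.
  assert (Hterm : cosh (INR m * a) + cos (INR m * PI * (2 * INR j - 1) / (2 * INR n))
    = 2 * (cosh_cos (a / 2) (theta n j) m ^ 2 + sinh_sin (a / 2) (theta n j) m ^ 2)).
  { unfold cosh_cos, sinh_sin. rewrite sqr_cosh_cos_add_sqr_sinh_sin.
    replace (2 * (INR m * (a / 2))) with (INR m * a) by field.
    replace (2 * (INR m * theta n j)) with (INR m * PI * (2 * INR j - 1) / (2 * INR n))
      by (unfold theta; field; lra).
    field. }
  rewrite Hterm, sqr_cosh_cos_prod.
  transitivity (2 * 4 ^ Nat.pred m * prod1 m (fun k =>
    cos (theta n j) ^ 2 * ((cosh_cos (a / 2) (theta n j) 1 - cos (2 * theta m k)) ^ 2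
             + sinh_sin (a / 2) (theta n j) 1 ^ 2))).
  { rewrite prod1_mul. ring. }
  f_equal. apply prod1_ext. intros k _.
  unfold cosh_cos, sinh_sin. rewrite !Rmult_1_l, cos_2a_cos.
  replace (2 * cos (theta m k) * cos (theta m k)) with (2 * cos (theta m k) ^ 2) by ring.
  apply cross_factor_eq.
  - lra.
  - exact ha.
  - pose proof (cosh_sq_sub_sinh_sq (a / 2)). lra.
  - pose proof (sin2_cos2 (theta n j)). unfold Rsqr in *. lra.
Qed.

Lemma prod_cosh_add_cos_eq_cross m n x alpha : (0 < n)%nat ->
  (forall j, (1 <= j <= n)%nat -> cosh (alpha j / 2) = x / cos (theta n j) - cos (theta n j)) ->
  prod1 n (fun j => cosh (INR m * alpha j) + cos (INR m * PI * (2 * INR j - 1) / (2 * INR n)))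
  = (2 * 4 ^ Nat.pred n) ^ m * (2 * 4 ^ Nat.pred m) ^ n
    * prod1 n (fun j => prod1 m (fun k => cross_factor x (cos (theta n j) ^ 2) (cos (theta m k) ^ 2))).
Proof.
  intros hn halpha.
  assert (HP : prod1 n (fun j => prod1 m (fun _ => cos (theta n j) ^ 2)) * (2 * 4 ^ Nat.pred n) ^ m = 1).
  { rewrite (prod1_ext n _ (fun j => (cos (theta n j) ^ 2) ^ m)) by (intros; apply prod1_const).
    rewrite prod1_pow, <- Rpow_mult_distr, prod_cos_theta_sq by exact hn. apply pow1. }
  set (term := fun j => cosh (INR m * alpha j) + cos (INR m * PI * (2 * INR j - 1) / (2 * INR n))).
  rewrite <- (Rmult_1_r (prod1 n term)), <- HP, <- Rmult_assoc, <- prod1_mul.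
  rewrite (prod1_ext n _ (fun j => 2 * 4 ^ Nat.pred m * prod1 m (fun k =>
             cross_factor x (cos (theta n j) ^ 2) (cos (theta m k) ^ 2))))
    by (intros j hj; apply cosh_add_cos_mul_cos_pow; auto).
  rewrite prod1_mul, prod1_const. ring.
Qed.

Theorem mainTheorem13 (m n : nat) (x : R) (alpha beta : nat -> R)
  (hm : (0 < m)%nat) (hn : (0 < n)%nat) (hx : 2 <= x)
  (halpha : forall j : nat, (1 <= j <= n)%nat ->
     0 <= alpha j /\
     cosh (alpha j / 2) = x / cos (theta n j) - cos (theta n j))
  (hbeta : forall k : nat, (1 <= k <= m)%nat ->
     0 <= beta k /\
     cosh (beta k / 2) = x / cos (theta m k) - cos (theta m k)) :
  prod1 n (fun j => cosh (INR m * alpha j)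
                    + cos (INR m * PI * (2 * INR j - 1) / (2 * INR n)))
  = prod1 m (fun k => cosh (INR n * beta k)
                    + cos (INR n * PI * (2 * INR k - 1) / (2 * INR m))).
Proof.
  rewrite (prod_cosh_add_cos_eq_cross m n x alpha hn (fun j hj => proj2 (halpha j hj))),
          (prod_cosh_add_cos_eq_cross n m x beta hm (fun k hk => proj2 (hbeta k hk))), prod1_swap.
  rewrite (prod1_ext m _ (fun k => prod1 n (fun j =>
             cross_factor x (cos (theta m k) ^ 2) (cos (theta n j) ^ 2))))
    by (intros k _; apply prod1_ext; intros j _; apply cross_factor_sym).
  ring.
Qed.
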